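(* Let $\boldsymbol{R}=[r_{ij}]\in\mathbb{C}^{N\times N}$ be Hermitian and $2N$-dominant, i.e. $r_{ii}\ge 2N\sum_{j\ne i}|r_{ij}|$ for all $i$. Define $\delta_1=0$ and $\delta_k=\sum_{i=1}^{k-1}|r_{ki}|$ for $k=2,\ldots,N$; define $a_k=2\delta_k+4\sum_{i=1}^{N-k}\delta_{k+i}$ for $k=1,\ldots,N-1$ and $a_N=2\delta_N$; and let $\overline{\boldsymbol{R}}=\boldsymbol{R}-\mathrm{Diag}(\boldsymbol{R})+\mathrm{diag}(a_1,\ldots,a_N)$. Let $\boldsymbol{g}\in\Omega^N$ be the output of the greedy method: $\boldsymbol{g}(1)=1$ and, for $k=1,\ldots,N-1$, $\boldsymbol{g}(k+1)$ is a maximizer over $x\in\Omega$ of $[\boldsymbol{g}(1),\ldots,\boldsymbol{g}(k),x]^H\boldsymbol{R}_{k+1}[\boldsymbol{g}(1),\ldots,\boldsymbol{g}(k),x]$. Then $\mathrm{Tr}(\overline{\boldsymbol{R}})\le\mathrm{Tr}(\boldsymbol{R})$ and \[ \boldsymbol{g}^H\boldsymbol{R}\boldsymbol{g}\ \ge\ \Big(1-\frac{1}{e}+\frac{1}{e}\cdot\frac{1}{2N+1}\Big)\max_{\boldsymbol{s}\in\Omega^N}\boldsymbol{s}^H\boldsymbol{R}\boldsymbol{s}. \]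
   Context: $\Omega=\{x\in\mathbb{C}:|x|=1\}$. $\boldsymbol{R}_m$ denotes the principal submatrix of $\boldsymbol{R}$ formed by its first $m$ rows and first $m$ columns, and $[c_1,\ldots,c_m]$ denotes the column vector with entries $c_1,\ldots,c_m$. A square matrix $[r_{ij}]_{N\times N}$ is $M$-dominant if $r_{ii}\ge M\sum_{j=1,j\ne i}^N|r_{ij}|$ for all $i$. $\mathrm{Diag}(\boldsymbol{R})$ is the diagonal matrix with the diagonal of $\boldsymbol{R}$; $\mathrm{diag}(a_1,\ldots,a_N)$ is the diagonal matrix with entries $a_1,\ldots,a_N$. $\mathrm{Tr}$ is the trace. Empty sums are zero. *)

From HB Require Import structures.
From mathcomp Require Import all_boot all_order all_algebra.
From mathcomp Require Import complex.
From mathcomp Require Import reals.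
From mathcomp Require Import sequences exp.
Set Implicit Arguments. Unset Strict Implicit. Unset Printing Implicit Defensive.
Import Order.TTheory GRing.Theory Num.Theory.
Local Open Scope ring_scope.
Local Open Scope complex_scope.

Section Defs.
Variable R : realType.
Local Notation C := R[i].

Definition hermitian_mx n (A : 'M[C]_n) : Prop := forall i j, A j i = (A i j)^*.

Definition dominant n (M : C) (A : 'M[C]_n) : Prop :=
  forall i, M * (\sum_(j < n | j != i) `|A i j|) <= A i i.

Definition hform n (A : 'M[C]_n) (v : 'cV[C]_n) : C :=
  ((map_mx Num.conj v)^T *m A *m v) 0 0.

Definition psub n m (h : (m <= n)%N) (A : 'M[C]_n) : 'M[C]_m :=
  \matrix_(i < m, j < m) A (widen_ord h i) (widen_ord h j).

(* delta_k (0-indexed: k = 0 corresponds to delta_1 = 0) *)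
Definition delta n (A : 'M[C]_n) (k : 'I_n) : C :=
  \sum_(i < n | (i < k)%N) `|A k i|.

(* a_k = 2 delta_k + 4 sum_{i=1}^{N-k} delta_{k+i} (the sum is empty for k = N) *)
Definition acoef n (A : 'M[C]_n) (k : 'I_n) : C :=
  2 * delta A k + 4 * \sum_(j < n | (k < j)%N) delta A j.

Definition Rbar n (A : 'M[C]_n) : 'M[C]_n :=
  A - diag_mx (\row_i A i i) + diag_mx (\row_i acoef A i).

Definition gext n (g : 'cV[C]_n) (m : 'I_n) (x : C) : 'cV[C]_m.+1 :=
  \col_(i < m.+1) (if i == ord_max then x else g (widen_ord (ltn_ord m) i) 0).

Definition greedy_output n (A : 'M[C]_n) (g : 'cV[C]_n) : Prop :=
  (forall i, `|g i 0| = 1) /\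
  (forall i : 'I_n, (i : nat) = 0%N -> g i 0 = 1) /\
  (forall m : 'I_n, (0 < m)%N -> forall x : C, `|x| = 1 ->
     hform (psub (ltn_ord m) A) (gext g m x) <= hform (psub (ltn_ord m) A) (gext g m (g m 0))).

Definition eulerC : C := (expR (1 : R))%:C.
End Defs.

From HB Require Import structures.
From mathcomp Require Import all_boot all_order all_algebra.
From mathcomp Require Import complex.
From mathcomp Require Import reals.
From mathcomp Require Import sequences exp.
From mathcomp Require Import ring lra zify.
Set Implicit Arguments. Unset Strict Implicit. Unset Printing Implicit Defensive.
Import Order.TTheory GRing.Theory Num.Theory.
Local Open Scope ring_scope.

(* Write T = Tr(R) and D = delta_1 + ... + delta_N, so that the off-diagonal
   entries of the Hermitian matrix R have total modulus 2D.  Adding the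
   coordinate x = g(k+1) to [g(1),...,g(k)] changes the form by a diagonal
   term r_{k+1,k+1} plus a cross term that is odd in x; since the greedy choice
   beats -g(k+1), that cross term is nonnegative, and so g^H R g >= T.  For any
   unimodular s the cross terms are bounded by 2 delta_{k+1}, whence
   s^H R s <= T + 2D.  Dominance gives 2N * 2D <= T, which yields both
   Tr(Rbar) = sum_k a_k <= 4ND <= T and, once e <= 2N (i.e. N >= 2; for N = 1
   we have D = 0), the approximation ratio. *)

Section LeadingForm.
Variables (C : numClosedFieldType) (a : nat -> nat -> C).
Implicit Types (w : nat -> C) (m N : nat) (x : C).

Definition lead_form w m := \sum_(i < m) \sum_(j < m) (w i)^* * a i j * w j.

Definition cross_form w m x :=
  \sum_(j < m) x^* * a m j * w j + \sum_(i < m) (w i)^* * a i m * x.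

Lemma lead_formS w m :
  lead_form w m.+1 = lead_form w m + cross_form w m (w m) + (w m)^* * a m m * w m.
Proof.
rewrite /lead_form /cross_form big_ord_recr /=.
under eq_bigr do rewrite big_ord_recr /=.
rewrite big_split /= big_ord_recr /= !addrA; congr (_ + _).
by rewrite -!addrA; congr (_ + _); rewrite addrC.
Qed.

Lemma eq_lead_form w w' m :
  (forall i, (i < m)%N -> w i = w' i) -> lead_form w m = lead_form w' m.
Proof. by move=> ww'; apply: eq_bigr => i _; apply: eq_bigr => j _; rewrite !ww'. Qed.

Lemma eq_cross_form w w' m x :
  (forall i, (i < m)%N -> w i = w' i) -> cross_form w m x = cross_form w' m x.
Proof. by move=> ww'; congr (_ + _); apply: eq_bigr => j _; rewrite ww'. Qed.

Lemma cross_formN w m x : cross_form w m (- x) = - cross_form w m x.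
Proof.
rewrite /cross_form opprD -!sumrN.
by congr (_ + _); apply: eq_bigr => j _; rewrite ?rmorphN /=; ring.
Qed.

Lemma conjC_mulK_norm1 x c : `|x| = 1 -> x^* * c * x = c.
Proof. by move=> x1; rewrite mulrAC -normCKC x1 expr1n mul1r. Qed.

Lemma cross_form_ge0_of_max w m :
  `|w m| = 1 ->
  (forall x, `|x| = 1 ->
     lead_form (fun i => if i == m then x else w i) m.+1 <= lead_form w m.+1) ->
  0 <= cross_form w m (w m).
Proof.
move=> wm1 /(_ (- w m)); rewrite normrN => /(_ wm1).
rewrite !lead_formS eqxx (@eq_lead_form _ w) => [|i /ltn_eqF -> //].
rewrite (@eq_cross_form _ w) => [|i /ltn_eqF -> //].
rewrite cross_formN rmorphN /= !(mulrN, mulNr) opprK lerD2r lerD2l.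
by rewrite -subr_ge0 opprK -mulr2n pmulrn_lge0.
Qed.

Lemma lead_form_ge_diag w N :
  (forall i, `|w i| = 1) -> (forall m, (m < N)%N -> 0 <= cross_form w m (w m)) ->
  \sum_(i < N) a i i <= lead_form w N.
Proof.
move=> w1; elim: N => [|N IH] cross_ge0; first by rewrite /lead_form !big_ord0.
rewrite lead_formS big_ord_recr /= conjC_mulK_norm1 // lerD2r.
rewrite -[leLHS]addr0 lerD ?cross_ge0 // IH // => m ltmN.
by rewrite cross_ge0 // ltnS ltnW.
Qed.

Hypothesis a_herm : forall i j, a j i = (a i j)^*.

Lemma cross_form_le w m :
  (forall i, `|w i| = 1) -> cross_form w m (w m) <= 2 * \sum_(j < m) `|a m j|.
Proof.
move=> w1; set z := \sum_(j < m) (w m)^* * a m j * w j.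
have -> : cross_form w m (w m) = z + z^*.
  rewrite /cross_form rmorph_sum; congr (_ + _); apply: eq_bigr => j _.
  by rewrite !rmorphM /= conjCK a_herm; ring.
have z_real : z + z^* \is Num.real by rewrite CrealE rmorphD /= conjCK addrC.
apply: le_trans (real_ler_norm z_real) _; apply: le_trans (ler_normD _ _) _.
rewrite norm_conjC -mulr2n mulr_natl lerMn2r /=.
apply: le_trans (ler_norm_sum _ _ _) _; apply: ler_sum => j _.
by rewrite !normrM norm_conjC !w1 mul1r mulr1.
Qed.

Lemma lead_form_le w N :
  (forall i, `|w i| = 1) ->
  lead_form w N <= \sum_(i < N) a i i + 2 * \sum_(k < N) \sum_(j < k) `|a k j|.
Proof.
move=> w1; elim: N => [|N IH]; first by rewrite /lead_form !big_ord0 mulr0 addr0.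
rewrite !big_ord_recr /= lead_formS conjC_mulK_norm1 // [leRHS]addrAC lerD2r.
by rewrite mulrDr [leRHS]addrA lerD // cross_form_le.
Qed.

End LeadingForm.

Lemma mulrDl_le_of_dominated (F : numDomainType) (c k t d : F) :
  c <= 1 -> k * d <= t -> c * (k + 1) * d <= k * d -> c * (t + d) <= t.
Proof.
move=> c_le1 kd_le_t ck_le_k; rewrite -subr_ge0.
have -> : t - c * (t + d) = (1 - c) * (t - k * d) + (k * d - c * (k + 1) * d) by ring.
by rewrite addr_ge0 ?mulr_ge0 ?subr_ge0.
Qed.

Section GreedyRatio.
Variables (F : numFieldType) (e k : F).
Hypotheses (e_ge1 : 1 <= e) (k_ge0 : 0 <= k).

Definition greedy_ratio := 1 - 1 / e + 1 / e * (1 / (k + 1)).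

Let e_gt0 : 0 < e. Proof. exact: lt_le_trans ltr01 e_ge1. Qed.
Let k1_gt0 : 0 < k + 1. Proof. by rewrite ltr_wpDl. Qed.

Let greedy_ratioE : greedy_ratio = 1 - k / ((k + 1) * e).
Proof. by rewrite /greedy_ratio; field; rewrite ?gt_eqF. Qed.

Lemma greedy_ratio_ge0 : 0 <= greedy_ratio.
Proof.
rewrite greedy_ratioE subr_ge0 ler_pdivrMr ?mulr_gt0 // mul1r.
by apply: le_trans (ler_peMr _ e_ge1); rewrite ?lerDl ?ltW.
Qed.

Lemma greedy_ratio_le1 : greedy_ratio <= 1.
Proof. by rewrite greedy_ratioE gerBl divr_ge0 // mulr_ge0 // ltW. Qed.

Lemma greedy_ratio_mulDr_le : e <= k -> greedy_ratio * (k + 1) <= k.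
Proof.
move=> e_le_k; have -> : greedy_ratio * (k + 1) = k + 1 - k / e.
  by rewrite greedy_ratioE mulrBl mul1r; field; rewrite ?gt_eqF.
by rewrite lerBlDr lerD2l ler_pdivlMr // mul1r.
Qed.

End GreedyRatio.

Lemma expR1_le4 (R : realType) : expR (1 : R) <= 4.
Proof.
have -> : (1 : R) = 2%:R * (1 / 2) by field.
rewrite expRM_natl; have := expRxMexpNx_1 (1 / 2 : R).
have := expR_ge1Dx (- (1 / 2) : R); have := expR_gt0 (1 / 2 : R); nra.
Qed.

Local Open Scope complex_scope.

Section Trace.
Variables (R : realType) (n : nat).
Implicit Types (A : 'M[R[i]]_n) (M : R[i]).

Lemma delta_ge0 A k : 0 <= delta A k.
Proof. exact: sumr_ge0. Qed.

Lemma sum_delta_ge0 A : 0 <= \sum_k delta A k.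
Proof. by apply: sumr_ge0 => k _; apply: delta_ge0. Qed.

Lemma hermitian_offdiag_sum A : hermitian_mx A ->
  \sum_i \sum_(j | j != i) `|A i j| = 2 * \sum_i delta A i.
Proof.
move=> A_herm; rewrite mulr2n mulrDl mul1r -big_split /=.
transitivity (\sum_i (delta A i + \sum_(j < n | (i < j)%N) `|A i j|)).
  apply: eq_bigr => i _; rewrite (bigID (fun j : 'I_n => (j < i)%N)) /=.
  by congr (_ + _); apply: eq_bigl => j; rewrite -val_eqE /=; case: ltngtP.
rewrite !big_split /=; congr (_ + _).
rewrite (eq_bigr _ (fun i _ => big_mkcond _ _)) exchange_big /=.
apply: eq_bigr => j _; rewrite /delta [RHS]big_mkcond.
by apply: eq_bigr => i _; case: ifP => // _; rewrite A_herm norm_conjC.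
Qed.

Lemma dominant_mxtrace_ge M A : hermitian_mx A -> dominant M A ->
  M * (2 * \sum_i delta A i) <= \tr A.
Proof.
move=> A_herm A_dom; rewrite -hermitian_offdiag_sum // mulr_sumr.
exact: ler_sum.
Qed.

Lemma acoef_le A k : acoef A k <= 4 * \sum_i delta A i.
Proof.
have delta_k_le : delta A k <= \sum_(j < n | ~~ (k < j)%N) delta A j.
  by rewrite (bigD1 k) ?ltnn //= lerDl sumr_ge0 // => j _; apply: delta_ge0.
rewrite (bigID (fun j : 'I_n => (k < j)%N)) /= [_ + _]addrC mulrDr lerD2r.
apply: le_trans (ler_wpM2l _ delta_k_le) => //.
by rewrite ler_wpM2r ?delta_ge0 // ler_nat.
Qed.

Lemma mxtrace_Rbar A : \tr (Rbar A) = \sum_i acoef A i.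
Proof. by apply: eq_bigr => i _; rewrite !mxE eqxx !mulr1n subrr add0r. Qed.

Lemma mxtrace_Rbar_le A : hermitian_mx A -> dominant (2 * n%:R) A ->
  \tr (Rbar A) <= \tr A.
Proof.
move=> A_herm A_dom; apply: le_trans _ (dominant_mxtrace_ge A_herm A_dom).
rewrite mxtrace_Rbar; apply: le_trans (ler_sum _ (fun k _ => acoef_le A k)) _.
rewrite sumr_const card_ord [leLHS](_ : _ = 2 * n%:R * (2 * \sum_i delta A i)) //.
by rewrite -[LHS]mulr_natr; ring.
Qed.

End Trace.

Lemma hform_lead_form (R : realType) k (B : 'M[R[i]]_k) (u : 'cV[R[i]]_k)
    (b : nat -> nat -> R[i]) (w : nat -> R[i]) :
  (forall i j : 'I_k, B i j = b i j) -> (forall i : 'I_k, u i 0 = w i) ->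
  hform B u = lead_form b w k.
Proof.
move=> Bb uw; rewrite /hform /lead_form mxE.
under eq_bigr do rewrite mxE mulr_suml.
rewrite exchange_big /=; apply: eq_bigr => i _; apply: eq_bigr => j _.
by rewrite !mxE Bb !uw.
Qed.

Section GreedyForm.
Variables (R : realType) (n : nat).
Implicit Types (A : 'M[R[i]]_n.+1) (g s : 'cV[R[i]]_n.+1).

Definition nat_mx A i j := A (inord i) (inord j).
Definition nat_cv g i := g (inord i) 0.

Lemma mxtrace_nat A : \tr A = \sum_(i < n.+1) nat_mx A i i.
Proof. by apply: eq_bigr => i _; rewrite /nat_mx inord_val. Qed.

Lemma hform_nat A g : hform A g = lead_form (nat_mx A) (nat_cv g) n.+1.
Proof. by apply: hform_lead_form => *; rewrite /nat_mx /nat_cv !inord_val. Qed.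

Lemma hform_psub_gext A g (m : 'I_n.+1) x :
  hform (psub (ltn_ord m) A) (gext g m x) =
  lead_form (nat_mx A) (fun i => if i == m then x else nat_cv g i) m.+1.
Proof.
have widenE (i : 'I_m.+1) : widen_ord (ltn_ord m) i = inord i.
  by apply: val_inj; rewrite /= inordK // (leq_trans (ltn_ord i)).
by apply: hform_lead_form => [i j|i]; rewrite mxE ?widenE.
Qed.

Lemma greedy_cross_form_ge0 A g : greedy_output A g ->
  forall m, (m < n.+1)%N -> 0 <= cross_form (nat_mx A) (nat_cv g) m (nat_cv g m).
Proof.
case=> g1 [_ g_max] [|m] lt_m_n; first by rewrite /cross_form !big_ord0 addr0.
have nat_cv1 i : `|nat_cv g i| = 1 by rewrite /nat_cv g1.
apply: cross_form_ge0_of_max => // x x1.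
have := g_max (Ordinal lt_m_n) isT x x1; rewrite !hform_psub_gext.
congr (_ <= _); apply: eq_lead_form => i _ /=.
by case: eqP => // ->; rewrite /nat_cv -[m.+1]/(Ordinal lt_m_n : nat) inord_val.
Qed.

Lemma mxtrace_le_greedy A g : greedy_output A g -> \tr A <= hform A g.
Proof.
move=> g_greedy; rewrite hform_nat mxtrace_nat.
apply: lead_form_ge_diag => [i|]; first by rewrite /nat_cv g_greedy.1.
exact: greedy_cross_form_ge0.
Qed.

Lemma hform_le_unimodular A s : hermitian_mx A -> (forall i, `|s i 0| = 1) ->
  hform A s <= \tr A + 2 * \sum_i delta A i.
Proof.
move=> A_herm s1; rewrite hform_nat mxtrace_nat.
have -> : \sum_i delta A i = \sum_(k < n.+1) \sum_(j < k) `|nat_mx A k j|.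
  apply: eq_bigr => k _.
  rewrite (big_ord_widen n.+1 (fun j => `|nat_mx A k j|) (ltnW (ltn_ord k))).
  by apply: eq_bigr => i _; rewrite /nat_mx !inord_val.
apply: lead_form_le => [i j|i]; first by rewrite /nat_mx A_herm.
by rewrite /nat_cv s1.
Qed.

End GreedyForm.

Lemma eulerC_ge1 (R : realType) : 1 <= eulerC R.
Proof. by rewrite /eulerC -(rmorph1 (real_complex R)) lecR ltW ?expR_gt1. Qed.

Lemma eulerC_le4 (R : realType) : eulerC R <= 4.
Proof. by rewrite /eulerC -(rmorph_nat (real_complex R) 4) lecR expR1_le4. Qed.

Theorem proposition2 (R : realType) (n : nat) (A : 'M[R[i]]_n.+1) (g : 'cV[R[i]]_n.+1) :
  hermitian_mx A ->
  dominant (2 * (n.+1)%:R) A ->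
  greedy_output A g ->
  \tr (Rbar A) <= \tr A /\
  (forall s : 'cV[R[i]]_n.+1, (forall i, `|s i 0| = 1) ->
     (1 - 1 / eulerC R + 1 / eulerC R * (1 / (2 * (n.+1)%:R + 1))) * hform A s
       <= hform A g).
Proof.
move=> A_herm A_dom g_greedy; split; first exact: mxtrace_Rbar_le.
move=> s s1; set k : R[i] := 2 * (n.+1)%:R; set D := 2 * \sum_i delta A i.
rewrite -/(greedy_ratio (eulerC R) k).
have e_ge1 := eulerC_ge1 R.
have k_ge0 : 0 <= k by rewrite mulr_ge0 ?ler0n.
have D_ge0 : 0 <= D by rewrite mulr_ge0 ?sum_delta_ge0.
have ratio_dom : greedy_ratio (eulerC R) k * (k + 1) * D <= k * D.
  have [n0|n_gt0] := posnP n.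
    suff -> : D = 0 by rewrite !mulr0.
    rewrite /D big1 ?mulr0 // => i _; apply: big1 => j lt_ji.
    by exfalso; have := ltn_ord i; lia.
  rewrite ler_wpM2r // greedy_ratio_mulDr_le //.
  by apply: le_trans (eulerC_le4 R) _; rewrite /k -natrM ler_nat; lia.
have s_le := hform_le_unimodular A_herm s1.
apply: le_trans (ler_wpM2l (greedy_ratio_ge0 e_ge1 k_ge0) s_le) _.
apply: le_trans (mxtrace_le_greedy g_greedy).
apply: mulrDl_le_of_dominated ratio_dom; first exact: greedy_ratio_le1.
exact: dominant_mxtrace_ge.
Qed.
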